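(* Let $\pi$ be an $X_q(A_1)$-module algebra structure on $\mathbb C_q[x,y,z]$ of non-diagonal type, with $K_i(x)=\alpha_ix$, $K_i(y)=\beta_iy+t_ixz$, $K_i(z)=\gamma_iz$ ($i=1,2$). Let $a_0=(E(x))_0$, $c_0=(E(z))_0$, $a_0'=(F(x))_0$, $c_0'=(F(z))_0$. Then: 1. If $a_0\neq0$, then $\alpha_1=q$, $\alpha_2=-q$, $\beta_1^{-1}\beta_2=q$, $\gamma_1^{-1}\gamma_2=q$, $(E(x))_1=0$ and $(E(y))_1=-\frac{a_0(t_2+qt_1)}{2q\beta_1}z$. 2. If $c_0\neq0$, then $\gamma_1=q$, $\gamma_2=-q$, $\beta_1^{-1}\beta_2=q^{-1}$, $\alpha_1^{-1}\alpha_2=q^{-1}$, $(E(z))_1=0$ and $(E(y))_1=-\frac{c_0(t_1+qt_2)}{2q\beta_1}x$. 3. If $a_0'\neq0$, then $\alpha_1=q^{-1}$, $\alpha_2=-q^{-1}$, $\beta_1\beta_2^{-1}=q^{-1}$, $\gamma_1\gamma_2^{-1}=q^{-1}$, $(F(x))_1=0$ and $(F(y))_1=\frac{a_0'(t_2-qt_1)}{2q\alpha_2\gamma_2}z$. 4. If $c_0'\neq0$, then $\gamma_1=q^{-1}$, $\gamma_2=-q^{-1}$, $\beta_1\beta_2^{-1}=q$, $\alpha_1\alpha_2^{-1}=q$, $(F(z))_1=0$ and $(F(y))_1=\frac{c_0'(qt_2-t_1)}{2q\alpha_2\gamma_2}x$.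
   Context: Fix $q\in\mathbb C^*$ not a root of unity, i.e. $q^n\neq1$ for all nonzero integers $n$. $X_q(A_1)$ is the unital associative $\mathbb C$-algebra generated by $E,F,K_1^{\pm1},K_2^{\pm1}$ with relations: - $K_iK_i^{-1}=K_i^{-1}K_i=1$ and $K_1K_2=K_2K_1$; - $K_1E=q^{-1}EK_1$, $K_1F=qFK_1$, $K_2E=-q^{-1}EK_2$, $K_2F=-qFK_2$; - $EF-FE=\frac{K_2K_1^{-1}-K_2^{-1}K_1}{q-q^{-1}}$; - $E^2=F^2=0$. It is a Hopf algebra with $\Delta(K_i)=K_i\otimes K_i$, $\Delta(E)=E\otimes1+K_2K_1^{-1}\otimes E$, $\Delta(F)=1\otimes F+F\otimes K_2^{-1}K_1$, $\varepsilon(K_i)=1$ and $\varepsilon(E)=\varepsilon(F)=0$. $\mathbb C_q[x,y,z]$ is the unital $\mathbb C$-algebra generated by $x,y,z$ with $yx=qxy$, $zy=qyz$, $zx=qxz$. It is graded by total degree in $x,y,z$. For $p\in\mathbb C_q[x,y,z]$, $(p)_s$ denotes the homogeneous component of $p$ of degree $s$. An $X_q(A_1)$-module algebra structure on $A=\mathbb C_q[x,y,z]$ is an algebra homomorphism $\pi:X_q(A_1)\to\mathrm{End}_{\mathbb C}(A)$ such that $\pi(h)(ab)=\sum\pi(h_{(1)})(a)\pi(h_{(2)})(b)$ and $\pi(h)(1)=\varepsilon(h)1$, where $\Delta(h)=\sum h_{(1)}\otimes h_{(2)}$. One writes $h(a)$ for $\pi(h)(a)$. Concretely, $K_1,K_2$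 act by algebra automorphisms, $E(ab)=E(a)b+K_2K_1^{-1}(a)E(b)$ and $F(ab)=aF(b)+F(a)K_2^{-1}K_1(b)$. The structure is of non-diagonal type if there are $\alpha_i,\beta_i,\gamma_i,t_i\in\mathbb C^*$ ($i=1,2$) with $K_i(x)=\alpha_ix$, $K_i(y)=\beta_iy+t_ixz$, $K_i(z)=\gamma_iz$. *)

From HB Require Import structures.
From mathcomp Require Import all_boot all_order all_algebra.
From mathcomp Require Import complex.
From mathcomp Require Import Rstruct.
Set Implicit Arguments. Unset Strict Implicit. Unset Printing Implicit Defensive.
Import Order.TTheory GRing.Theory Num.Theory.
Local Open Scope ring_scope.

Definition C : fieldType := (Rdefinitions.R)[i].

(* Underlying vector space of C_q[x,y,z]: the space with basis the ordered
   monomials x^i y^j z^k, represented by triply nested polynomials: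
   the coefficient of x^i y^j z^k in p is  p`_i`_j`_k. *)
Definition A := {poly {poly {poly C}}}.

Definition coef3 (p : A) (i j k : nat) : C := p`_i`_j`_k.

Definition mono (i j k : nat) : A :=
  ((('X^k : {poly C})%:P * 'X^j : {poly {poly C}})%:P * 'X^i).

Definition scal (c : C) (p : A) : A := (c%:P%:P%:P) * p.

(* the (twisted) multiplication of C_q[x,y,z], with y x = q x y, z y = q y z,
   z x = q x z:
   (x^i y^j z^k) (x^d y^e z^f) = q^(j d + k d + k e) x^(i+d) y^(j+e) z^(k+f),
   extended bilinearly. *)
Definition qmul (q : C) (a b : A) : A :=
  \sum_(i < size a) \sum_(j < size a`_i) \sum_(k < size a`_i`_j)
  \sum_(d < size b) \sum_(e < size b`_d) \sum_(f < size b`_d`_e)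
    scal (coef3 a i j k * coef3 b d e f * q ^+ (j * d + k * d + k * e)%N)
         (mono (i + d) (j + e) (k + f)).

Definition one : A := mono 0 0 0.
Definition gx : A := mono 1 0 0.
Definition gy : A := mono 0 1 0.
Definition gz : A := mono 0 0 1.

Definition hcomp (s : nat) (p : A) : A :=
  \sum_(i < s.+1) \sum_(j < s.+1) \sum_(k < s.+1 | (i + j + k == s)%N)
    scal (coef3 p i j k) (mono i j k).

Definition Clinear (f : A -> A) : Prop :=
  forall (c : C) (a b : A), f (scal c a + b) = scal c (f a) + f b.

(* An X_q(A_1)-module algebra structure on C_q[x,y,z], given by the images
   E, F, K1, K2, K1', K2' (K1' = K1^{-1}, K2' = K2^{-1}) of the generators:
   they are C-linear endomorphisms satisfying the defining relations of
   X_q(A_1) (so that they define an algebra map X_q(A_1) -> End_C(A)),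
   and the module-algebra compatibilities on generators
   (which imply them for all h since Delta and epsilon are algebra maps). *)
Definition module_algebra (q : C) (E F K1 K2 K1' K2' : A -> A) : Prop :=
  (Clinear E /\ Clinear F /\ Clinear K1 /\ Clinear K2 /\ Clinear K1'
     /\ Clinear K2') /\
  ((forall a, K1 (K1' a) = a) /\ (forall a, K1' (K1 a) = a) /\
   (forall a, K2 (K2' a) = a) /\ (forall a, K2' (K2 a) = a) /\
   (forall a, K1 (K2 a) = K2 (K1 a))) /\
  ((forall a, K1 (E a) = scal q^-1 (E (K1 a))) /\
   (forall a, K1 (F a) = scal q (F (K1 a))) /\
   (forall a, K2 (E a) = scal (- q^-1) (E (K2 a))) /\
   (forall a, K2 (F a) = scal (- q) (F (K2 a)))) /\
  ((forall a, E (F a) - F (E a)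
              = scal (q - q^-1)^-1 (K2 (K1' a) - K2' (K1 a))) /\
   (forall a, E (E a) = 0) /\ (forall a, F (F a) = 0)) /\
  ((forall a b, K1 (qmul q a b) = qmul q (K1 a) (K1 b)) /\
   (forall a b, K2 (qmul q a b) = qmul q (K2 a) (K2 b)) /\
   (forall a b, E (qmul q a b) = qmul q (E a) b + qmul q (K2 (K1' a)) (E b)) /\
   (forall a b, F (qmul q a b) = qmul q a (F b) + qmul q (F a) (K2' (K1 b))) /\
   K1 one = one /\ K2 one = one /\ E one = 0 /\ F one = 0).

From Pilot Require Import Defs.
From HB Require Import structures.
From mathcomp Require Import all_boot all_order all_algebra.
From mathcomp Require Import complex.
From mathcomp Require Import Rstruct.
From mathcomp Require Import ring.
Set Implicit Arguments. Unset Strict Implicit. Unset Printing Implicit Defensive.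
Import GRing.Theory.
Local Open Scope ring_scope.

(* Modulo monomials of degree at least two the product of C_q[x,y,z] is commutative, and
   each K_i acts diagonally with weights (al_i, be_i, ga_i): the non-diagonal term t_i x z
   of K_i y has degree two.  E and F are both skew derivations
   D(u v) = D(u) R(v) + L(u) D(v) with K_1 D = la D K_1, K_2 D = - la D K_2 and L, R
   diagonal in low degree.  Reading these relations, together with D applied to
   y x = q x y, z x = q x z and z y = q y z, on the constant and linear coefficients of
   D x, D y, D z gives a linear system: a nonzero constant term of D x (or D z) pins down
   the weights, kills the linear part of D x (or D z) and determines that of D y.  For F the
   resulting formula for (F y)_1 is put in the stated form with the coefficient of x z in
   K_1 K_2 y = K_2 K_1 y. *)

Local Notation cst p := (coef3 p 0 0 0).
Local Notation coefx p := (coef3 p 1 0 0).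
Local Notation coefy p := (coef3 p 0 1 0).
Local Notation coefz p := (coef3 p 0 0 1).

Lemma coef3D a b i j k : coef3 (a + b) i j k = coef3 a i j k + coef3 b i j k.
Proof. by rewrite /coef3 !coefD. Qed.

Lemma coef3_scal c a i j k : coef3 (scal c a) i j k = c * coef3 a i j k.
Proof. by rewrite /coef3 /scal !coefCM. Qed.

Lemma coef3_sum (I : Type) (r : seq I) (P : pred I) (F : I -> A) i j k :
  coef3 (\sum_(x <- r | P x) F x) i j k = \sum_(x <- r | P x) coef3 (F x) i j k.
Proof. by rewrite /coef3 !coef_sum. Qed.

Lemma coef3_mono a b c i j k :
  coef3 (mono a b c) i j k = ((i == a) && (j == b) && (k == c))%:R.
Proof.
rewrite /coef3 /mono coefCM coefXn; case: (i == a); last by rewrite mulr0 !coef0.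
rewrite mulr1 coefCM coefXn; case: (j == b); last by rewrite mulr0 !coef0.
by rewrite mulr1 coefXn.
Qed.

Lemma coef3_eq0 (a : A) i j k :
  [|| leq (size a) i, leq (size a`_i) j | leq (size a`_i`_j) k] -> coef3 a i j k = 0.
Proof.
by rewrite /coef3; case/or3P => h; rewrite (nth_default _ h) ?coef0.
Qed.

Lemma coef3_inj a b : (forall i j k, coef3 a i j k = coef3 b i j k) -> a = b.
Proof. by move=> ab; do 3 (apply/polyP => ?); apply: ab. Qed.

Lemma big_nat_trunc_eq n m (F G : nat -> C) :
  (forall i, (i < n)%N -> (i < m)%N -> F i = G i) ->
  (forall i, (m <= i)%N -> F i = 0) -> (forall i, (n <= i)%N -> G i = 0) ->
  \sum_(0 <= i < n) F i = \sum_(0 <= i < m) G i.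
Proof.
rewrite !big_mkord.
wlog le_nm : n m F G / (n <= m)%N => [W FG F0 G0|FG F0 G0].
  have [/W|/ltnW le_mn] := leqP n m; first exact.
  by symmetry; apply: W => // i lt_im lt_in; rewrite FG.
rewrite (big_ord_widen m F le_nm) big_mkcond; apply: eq_bigr => i _ /=.
by case: ltnP => [lt_in|/G0 //]; apply: FG.
Qed.

Lemma big_nat_last n (F : nat -> C) :
  (forall x, (x < n)%N -> F x = 0) -> \sum_(0 <= x < n.+1) F x = F n.
Proof.
move=> F0; rewrite big_nat_recr //= big1_seq ?add0r // => x /andP[_].
by rewrite mem_index_iota => /F0.
Qed.

Definition qmul_term (q : C) (a b : A) (u v w i j k d e f : nat) : C :=
  coef3 a i j k * coef3 b d e f * q ^+ (j * d + k * d + k * e) *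
  ((u == i + d) && (v == j + e) && (w == k + f))%:R.

Lemma coef3_qmul q a b u v w :
  coef3 (qmul q a b) u v w =
  \sum_(0 <= i < size a) \sum_(0 <= j < size a`_i) \sum_(0 <= k < size a`_i`_j)
  \sum_(0 <= d < size b) \sum_(0 <= e < size b`_d) \sum_(0 <= f < size b`_d`_e)
    qmul_term q a b u v w i j k d e f.
Proof.
rewrite /qmul; do 6 (rewrite coef3_sum big_mkord; apply: eq_bigr => ? _).
by rewrite coef3_scal coef3_mono.
Qed.

Local Ltac sum_eq0 := repeat (apply: big1 => ? _).

Lemma coef3_qmul_box q a b u v w n1 n2 n3 n4 n5 n6 :
  (forall i j k d e f,
     ~~ [&& (i < n1)%N, (j < n2)%N, (k < n3)%N, (d < n4)%N, (e < n5)%N & (f < n6)%N] ->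
     qmul_term q a b u v w i j k d e f = 0) ->
  coef3 (qmul q a b) u v w =
  \sum_(0 <= i < n1) \sum_(0 <= j < n2) \sum_(0 <= k < n3)
  \sum_(0 <= d < n4) \sum_(0 <= e < n5) \sum_(0 <= f < n6)
    qmul_term q a b u v w i j k d e f.
Proof.
move=> out0; rewrite coef3_qmul.
have a0 i j k d e f : coef3 a i j k = 0 -> qmul_term q a b u v w i j k d e f = 0.
  by rewrite /qmul_term => ->; rewrite !mul0r.
have b0 i j k d e f : coef3 b d e f = 0 -> qmul_term q a b u v w i j k d e f = 0.
  by rewrite /qmul_term => ->; rewrite mulr0 !mul0r.
apply: big_nat_trunc_eq => [i _ _|i hi|i hi]; last 2 first.
- by sum_eq0; apply: out0; rewrite ltnNge hi.
- by sum_eq0; apply/a0/coef3_eq0; rewrite hi.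
apply: big_nat_trunc_eq => [j _ _|j hj|j hj]; last 2 first.
- by sum_eq0; apply: out0; rewrite (ltnNge j) hj andbF.
- by sum_eq0; apply/a0/coef3_eq0; rewrite hj orbT.
apply: big_nat_trunc_eq => [k _ _|k hk|k hk]; last 2 first.
- by sum_eq0; apply: out0; rewrite (ltnNge k) hk !andbF.
- by sum_eq0; apply/a0/coef3_eq0; rewrite hk !orbT.
apply: big_nat_trunc_eq => [d _ _|d hd|d hd]; last 2 first.
- by sum_eq0; apply: out0; rewrite (ltnNge d) hd !andbF.
- by sum_eq0; apply/b0/coef3_eq0; rewrite hd.
apply: big_nat_trunc_eq => [e _ _|e he|e he]; last 2 first.
- by sum_eq0; apply: out0; rewrite (ltnNge e) he !andbF.
- by sum_eq0; apply/b0/coef3_eq0; rewrite he orbT.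
apply: big_nat_trunc_eq => [f _ _|f hf|f hf] //.
- by apply: out0; rewrite (ltnNge f) hf !andbF.
- by apply/b0/coef3_eq0; rewrite hf !orbT.
Qed.

Lemma coef3_qmul_small q a b u v w :
  coef3 (qmul q a b) u v w =
  \sum_(0 <= i < u.+1) \sum_(0 <= j < v.+1) \sum_(0 <= k < w.+1)
  \sum_(0 <= d < u.+1) \sum_(0 <= e < v.+1) \sum_(0 <= f < w.+1)
    qmul_term q a b u v w i j k d e f.
Proof.
apply: coef3_qmul_box => i j k d e f; apply: contraNeq; rewrite /qmul_term.
case: (u =P i + d) => [->|_]; case: (v =P j + e) => [->|_]; case: (w =P k + f) => [->|_];
  rewrite /= ?mulr0 ?eqxx // => _.
by rewrite !ltnS !leq_addr !leq_addl.
Qed.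

Local Ltac expand_low := rewrite coef3_qmul_small !(big_nat1, big_nat_recr) //=;
  rewrite /qmul_term /= !(addr0, add0r, mulr1, mulr0, expr0).

Lemma qmul_cst q a b : cst (qmul q a b) = cst a * cst b.
Proof. by expand_low. Qed.

Lemma qmul_coefx q a b : coefx (qmul q a b) = cst a * coefx b + coefx a * cst b.
Proof. by expand_low. Qed.

Lemma qmul_coefy q a b : coefy (qmul q a b) = cst a * coefy b + coefy a * cst b.
Proof. by expand_low. Qed.

Lemma qmul_coefz q a b : coefz (qmul q a b) = cst a * coefz b + coefz a * cst b.
Proof. by expand_low. Qed.

Lemma coef3_smono c i j k u v w :
  coef3 (scal c (mono i j k)) u v w = if [&& u == i, v == j & w == k] then c else 0.
Proof.
rewrite coef3_scal coef3_mono.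
by case: (u == i); case: (v == j); case: (w == k); rewrite /= ?mulr1 ?mulr0.
Qed.

Lemma qmul_smono q c c' i j k d e f :
  qmul q (scal c (mono i j k)) (scal c' (mono d e f)) =
  scal (c * c' * q ^+ (j * d + k * d + k * e)) (mono (i + d) (j + e) (k + f)).
Proof.
apply: coef3_inj => u v w.
have term_eq i' j' k' d' e' f' :
  qmul_term q (scal c (mono i j k)) (scal c' (mono d e f)) u v w i' j' k' d' e' f' =
  if [&& i' == i, j' == j, k' == k, d' == d, e' == e & f' == f]
  then c * c' * q ^+ (j * d + k * d + k * e) *
       ((u == i + d) && (v == j + e) && (w == k + f))%:R
  else 0.
  rewrite /qmul_term !coef3_smono.
  case: (i' =P i) => [->|_]; case: (j' =P j) => [->|_]; case: (k' =P k) => [->|_];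
  case: (d' =P d) => [->|_]; case: (e' =P e) => [->|_]; case: (f' =P f) => [->|_];
  by rewrite /= ?mulr0 ?mul0r.
rewrite (coef3_qmul_box (n1 := i.+1) (n2 := j.+1) (n3 := k.+1)
                        (n4 := d.+1) (n5 := e.+1) (n6 := f.+1)); last first.
  move=> i' j' k' d' e' f'; rewrite term_eq; apply: contraNeq.
  case: ifP => [/and5P[/eqP-> /eqP-> /eqP-> /eqP-> /andP[/eqP-> /eqP->]] _|_].
    by rewrite !ltnSn.
  by rewrite eqxx.
do 6 (rewrite big_nat_last => [|x /ltn_eqF x_neq];
  last by sum_eq0; rewrite term_eq x_neq ?eqxx ?andbF).
by rewrite term_eq !eqxx coef3_scal coef3_mono.
Qed.

Lemma scal1 a : scal 1 a = a.
Proof. by rewrite /scal !polyC1 mul1r. Qed.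

Lemma scal0 a : scal 0 a = 0.
Proof. by rewrite /scal !polyC0 mul0r. Qed.

Lemma scalA c d a : scal c (scal d a) = scal (c * d) a.
Proof. by rewrite /scal !polyCM (mulrA (c%:P%:P%:P)). Qed.

Lemma scalDr c a b : scal c (a + b) = scal c a + scal c b.
Proof. by rewrite /scal mulrDr. Qed.

Lemma scalDl c d a : scal (c + d) a = scal c a + scal d a.
Proof. by rewrite /scal !rmorphD mulrDl. Qed.

Lemma qmul_mono q i j k d e f :
  qmul q (mono i j k) (mono d e f) =
  scal (q ^+ (j * d + k * d + k * e)) (mono (i + d) (j + e) (k + f)).
Proof. by rewrite -[mono i j k]scal1 -[mono d e f]scal1 qmul_smono !mul1r. Qed.

Lemma mono_xS q i j k : mono i.+1 j k = qmul q gx (mono i j k).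
Proof. by rewrite qmul_mono !mul0n !add0n expr0 scal1. Qed.

Lemma mono_yS q j k : mono 0 j.+1 k = qmul q gy (mono 0 j k).
Proof. by rewrite qmul_mono !mul0n !add0n expr0 scal1. Qed.

Lemma mono_zS q k : mono 0 0 k.+1 = qmul q gz (mono 0 0 k).
Proof. by rewrite qmul_mono !mul0n !add0n expr0 scal1. Qed.

Lemma qmul_yx q : qmul q gy gx = scal q (qmul q gx gy).
Proof. by rewrite !qmul_mono scalA mulr1. Qed.

Lemma qmul_zx q : qmul q gz gx = scal q (qmul q gx gz).
Proof. by rewrite !qmul_mono scalA mulr1. Qed.

Lemma qmul_zy q : qmul q gz gy = scal q (qmul q gy gz).
Proof. by rewrite !qmul_mono scalA mulr1. Qed.

Lemma qmul_xz q : qmul q gx gz = mono 1 0 1.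
Proof. by rewrite qmul_mono scal1. Qed.

Section LinearMaps.
Variable f : A -> A.
Hypothesis f_lin : Clinear f.

Lemma Clinear0 : f 0 = 0.
Proof. by have /eqP := f_lin 1 0 0; rewrite !scal1 addr0 addrC -subr_eq subrr eq_sym => /eqP. Qed.

Lemma ClinearD a b : f (a + b) = f a + f b.
Proof. by rewrite -{1}[a]scal1 f_lin scal1. Qed.

Lemma ClinearZ c a : f (scal c a) = scal c (f a).
Proof. by rewrite -[scal c a]addr0 f_lin Clinear0 addr0. Qed.

End LinearMaps.

Lemma poly_expansion (R : nzRingType) (r : {poly R}) :
  r = \sum_(i < size r) (r`_i)%:P * 'X^i.
Proof.
rewrite -[r in LHS]comp_polyXr comp_polyE.
by apply: eq_bigr => i _; rewrite mul_polyC.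
Qed.

Lemma mono_expansion (p : A) :
  p = \sum_(i < size p) \sum_(j < size p`_i) \sum_(k < size p`_i`_j)
        scal (coef3 p i j k) (mono i j k).
Proof.
rewrite {1}[p]poly_expansion; apply: eq_bigr => i _.
rewrite {1}[p`_i]poly_expansion rmorph_sum mulr_suml; apply eq_bigr => j _.
rewrite {1}[p`_i`_j]poly_expansion rmorph_sum mulr_suml rmorph_sum mulr_suml.
apply eq_bigr => k _.
by rewrite /scal /mono /coef3 !mulrA -!rmorphM /= mulrA -!rmorphM.
Qed.

Lemma hcomp1 p : hcomp 1 p = scal (coefx p) gx + scal (coefy p) gy + scal (coefz p) gz.
Proof.
rewrite /hcomp !(big_ord_recr, big_ord0) /=.
do 4 rewrite big_mkcond !big_ord_recr big_ord0 /=.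
by rewrite !add0r !addr0 addrC (addrC (scal _ (mono 0 0 1))) addrA.
Qed.

Lemma cst_gx : cst gx = 0. Proof. by rewrite coef3_mono. Qed.
Lemma coefx_gx : coefx gx = 1. Proof. by rewrite coef3_mono. Qed.
Lemma coefy_gx : coefy gx = 0. Proof. by rewrite coef3_mono. Qed.
Lemma coefz_gx : coefz gx = 0. Proof. by rewrite coef3_mono. Qed.
Lemma cst_gy : cst gy = 0. Proof. by rewrite coef3_mono. Qed.
Lemma coefx_gy : coefx gy = 0. Proof. by rewrite coef3_mono. Qed.
Lemma coefy_gy : coefy gy = 1. Proof. by rewrite coef3_mono. Qed.
Lemma coefz_gy : coefz gy = 0. Proof. by rewrite coef3_mono. Qed.
Lemma cst_gz : cst gz = 0. Proof. by rewrite coef3_mono. Qed.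
Lemma coefx_gz : coefx gz = 0. Proof. by rewrite coef3_mono. Qed.
Lemma coefy_gz : coefy gz = 0. Proof. by rewrite coef3_mono. Qed.
Lemma coefz_gz : coefz gz = 1. Proof. by rewrite coef3_mono. Qed.

Lemma congr_coef3 (a b : A) i j k : a = b -> coef3 a i j k = coef3 b i j k.
Proof. by move=> ->. Qed.

Definition low_diagonal_at (K : A -> A) (al be ga : C) (p : A) :=
  [/\ cst (K p) = cst p, coefx (K p) = al * coefx p,
      coefy (K p) = be * coefy p & coefz (K p) = ga * coefz p].

Definition low_diagonal (K : A -> A) (al be ga : C) :=
  forall p, low_diagonal_at K al be ga p.

Definition nondiagonal_automorphism (q al be ga t : C) (K : A -> A) :=
  [/\ Clinear K, {morph K : a b / qmul q a b}, K Defs.one = Defs.one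
    & [/\ K gx = scal al gx, K gy = scal be gy + scal t (qmul q gx gz) & K gz = scal ga gz]].

Section LowDiagonal.
Variables (K : A -> A) (al be ga : C).

Lemma low_diagonal_cst : low_diagonal K al be ga -> forall p, cst (K p) = cst p.
Proof. by move=> Kd p; case: (Kd p). Qed.

Lemma low_diagonal_coefx : low_diagonal K al be ga -> forall p, coefx (K p) = al * coefx p.
Proof. by move=> Kd p; case: (Kd p). Qed.

Lemma low_diagonal_coefy : low_diagonal K al be ga -> forall p, coefy (K p) = be * coefy p.
Proof. by move=> Kd p; case: (Kd p). Qed.

Lemma low_diagonal_coefz : low_diagonal K al be ga -> forall p, coefz (K p) = ga * coefz p.
Proof. by move=> Kd p; case: (Kd p). Qed.

Lemma low_diagonal_eigen p c : low_diagonal K al be ga -> K p = scal c p ->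
  [/\ cst p = c * cst p, al * coefx p = c * coefx p,
      be * coefy p = c * coefy p & ga * coefz p = c * coefz p].
Proof. by move=> Kd Kp; case: (Kd p); rewrite Kp !coef3_scal => -> -> -> ->. Qed.

Variables (q t : C).
Hypothesis K_aut : nondiagonal_automorphism q al be ga t K.

Lemma low_diagonal_at_qmul a b : low_diagonal_at K al be ga a -> low_diagonal_at K al be ga b ->
  low_diagonal_at K al be ga (qmul q a b).
Proof.
case: K_aut => _ K_mul _ _ [a0 ax ay az] [b0 bx b_y bz]; rewrite /low_diagonal_at K_mul.
by rewrite !(qmul_cst, qmul_coefx, qmul_coefy, qmul_coefz) a0 b0 ax bx ay b_y az bz;
  split; ring.
Qed.

Lemma low_diagonal_at_mono i j k : low_diagonal_at K al be ga (mono i j k).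
Proof.
case: K_aut => _ _ K_one [Kx Ky Kz].
have gen_coefs : [/\ low_diagonal_at K al be ga gx, low_diagonal_at K al be ga gy
                    & low_diagonal_at K al be ga gz].
  rewrite /low_diagonal_at Kx Ky Kz !coef3D !coef3_scal;
  rewrite !(qmul_cst, qmul_coefx, qmul_coefy, qmul_coefz);
  rewrite !(cst_gx, coefx_gx, coefy_gx, coefz_gx, cst_gy, coefx_gy, coefy_gy, coefz_gy);
  by rewrite !(cst_gz, coefx_gz, coefy_gz, coefz_gz, mulr0, mulr1, addr0).
case: gen_coefs => gxd gyd gzd.
elim: i => [|i IH]; last by rewrite (mono_xS q); apply: low_diagonal_at_qmul.
elim: j => [|j IH]; last by rewrite (mono_yS q); apply: low_diagonal_at_qmul.
elim: k => [|k IH]; last by rewrite (mono_zS q); apply: low_diagonal_at_qmul.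
by rewrite /low_diagonal_at -/Defs.one K_one /Defs.one !coef3_mono /= !mulr0n !mulr0.
Qed.

Lemma low_diagonal_of_nondiagonal : low_diagonal K al be ga.
Proof.
case: K_aut => K_lin _ _ _.
have lin_at a b c : low_diagonal_at K al be ga a -> low_diagonal_at K al be ga b ->
    low_diagonal_at K al be ga (scal c a + b).
  case=> a0 ax ay az [b0 bx b_y bz]; rewrite /low_diagonal_at K_lin.
  by rewrite !coef3D !coef3_scal a0 b0 ax bx ay b_y az bz; split; ring.
have zero_at : low_diagonal_at K al be ga 0.
  by rewrite /low_diagonal_at (Clinear0 K_lin) !(coef3_eq0 (a := 0)) ?size_poly0 ?mulr0.
move=> p; rewrite [p]mono_expansion.
apply: big_ind => // [a b ha hb|i _]; first by rewrite -[a]scal1; apply: lin_at.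
apply: big_ind => // [a b ha hb|j _]; first by rewrite -[a]scal1; apply: lin_at.
apply: big_ind => // [a b ha hb|k _]; first by rewrite -[a]scal1; apply: lin_at.
by rewrite -[scal _ _]addr0; apply: lin_at => //; apply: low_diagonal_at_mono.
Qed.

End LowDiagonal.

Lemma low_diagonal_id : low_diagonal (fun p => p) 1 1 1.
Proof. by move=> p; split; rewrite ?mul1r. Qed.

Lemma low_diagonal_comp K K' al be ga al' be' ga' :
  low_diagonal K al be ga -> low_diagonal K' al' be' ga' ->
  low_diagonal (fun p => K (K' p)) (al * al') (be * be') (ga * ga').
Proof.
move=> Kd K'd p; rewrite /low_diagonal_at.
by case: (Kd (K' p)) => -> -> -> ->; case: (K'd p) => -> -> -> ->; split; rewrite ?mulrA.
Qed.

Lemma low_diagonal_inv K K' al be ga : (forall p, K (K' p) = p) ->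
  al != 0 -> be != 0 -> ga != 0 ->
  low_diagonal K al be ga -> low_diagonal K' al^-1 be^-1 ga^-1.
Proof.
move=> KK' al0 be0 ga0 Kd p; case: (Kd (K' p)); rewrite KK' => e0 ex ey ez.
by split; rewrite ?e0 ?ex ?ey ?ez ?mulKf.
Qed.

Lemma eq0_of_distinct_mul (a b w : C) : a != b -> a * w = b * w -> w = 0.
Proof. by move=> ab /eqP; rewrite -subr_eq0 -mulrBl mulf_eq0 subr_eq0 (negbTE ab) => /eqP. Qed.

(* E is such a derivation with la = q^-1, L = K2 K1^-1 and R = id; F, after commuting the
   two summands of its Leibniz rule, with la = q, L = id and R = K2^-1 K1. *)
Definition skew_derivation (q la : C) (K1 K2 L R D : A -> A) :=
  [/\ Clinear D, forall a, K1 (D a) = scal la (D (K1 a)),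
      forall a, K2 (D a) = scal (- la) (D (K2 a)) &
      forall a b, D (qmul q a b) = qmul q (D a) (R b) + qmul q (L a) (D b)].

Local Ltac field_nz := field; do ?[apply/andP; split].

Lemma eq_lincomb1 (x y l r c : C) : l = r -> x - y = c * (l - r) -> x = y.
Proof. by move=> -> /eqP; rewrite subrr mulr0 subr_eq0 => /eqP. Qed.

Lemma eq_lincomb2 (x y l1 r1 l2 r2 c1 c2 : C) : l1 = r1 -> l2 = r2 ->
  x - y = c1 * (l1 - r1) + c2 * (l2 - r2) -> x = y.
Proof. by move=> -> -> /eqP; rewrite !subrr !mulr0 addr0 subr_eq0 => /eqP. Qed.

Lemma neq_of_ratio (a b r : C) : a != 0 -> r != 1 -> a^-1 * b = r -> a != b.
Proof. by move=> a0 r1 ab; apply/eqP => eq_ab; move: r1; rewrite -ab -eq_ab mulVf // eqxx. Qed.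

Section SkewDerivation.
Context {q la al1 al2 be1 be2 ga1 ga2 t1 t2 rx ry rz : C} {K1 K2 L R D : A -> A}.
Hypotheses (q_facts : q != 0 /\ q != 1 /\ 1 + q != 0) (la_facts : la != 0 /\ la != 1).
Hypotheses (weights_neq0 : al1 != 0 /\ be1 != 0 /\ ga1 != 0)
  (twist_neq0 : rx != 0 /\ ry != 0 /\ rz != 0).
Hypotheses (K1_aut : nondiagonal_automorphism q al1 be1 ga1 t1 K1)
  (K2_aut : nondiagonal_automorphism q al2 be2 ga2 t2 K2).
Hypotheses (R_low : low_diagonal R rx ry rz)
  (L_low : low_diagonal L (al1^-1 * al2 * rx) (be1^-1 * be2 * ry) (ga1^-1 * ga2 * rz)).
Hypothesis D_skew : skew_derivation q la K1 K2 L R D.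

Let q_neq0 := q_facts.1.
Let q_neq1 := q_facts.2.1.
Let q1_neq0 := q_facts.2.2.
Let la_neq0 := la_facts.1.
Let la_neq1 := la_facts.2.
Let al1_neq0 := weights_neq0.1.
Let be1_neq0 := weights_neq0.2.1.
Let ga1_neq0 := weights_neq0.2.2.
Let rx_neq0 := twist_neq0.1.
Let ry_neq0 := twist_neq0.2.1.
Let rz_neq0 := twist_neq0.2.2.
Let K1_low := low_diagonal_of_nondiagonal K1_aut.
Let K2_low := low_diagonal_of_nondiagonal K2_aut.
Let K1x : K1 gx = scal al1 gx. Proof. by case: K1_aut => _ _ _ []. Qed.
Let K1y : K1 gy = scal be1 gy + scal t1 (qmul q gx gz). Proof. by case: K1_aut => _ _ _ []. Qed.
Let K1z : K1 gz = scal ga1 gz. Proof. by case: K1_aut => _ _ _ []. Qed.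
Let K2x : K2 gx = scal al2 gx. Proof. by case: K2_aut => _ _ _ []. Qed.
Let K2y : K2 gy = scal be2 gy + scal t2 (qmul q gx gz). Proof. by case: K2_aut => _ _ _ []. Qed.
Let K2z : K2 gz = scal ga2 gz. Proof. by case: K2_aut => _ _ _ []. Qed.
Let D_lin : Clinear D. Proof. by case: D_skew. Qed.

Lemma skew_K1_eigen u c : K1 u = scal c u -> K1 (D u) = scal (la * c) (D u).
Proof. by case: D_skew => _ K1D _ _ Ku; rewrite K1D Ku (ClinearZ D_lin) scalA. Qed.

Lemma skew_K2_eigen u c : K2 u = scal c u -> K2 (D u) = scal (- la * c) (D u).
Proof. by case: D_skew => _ _ K2D _ Ku; rewrite K2D Ku (ClinearZ D_lin) scalA. Qed.

Lemma skew_qcomm u v : qmul q v u = scal q (qmul q u v) ->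
  qmul q (D v) (R u) + qmul q (L v) (D u) = scal q (qmul q (D u) (R v) + qmul q (L u) (D v)).
Proof. by case: D_skew => _ _ _ Dmul vu; rewrite -!Dmul vu (ClinearZ D_lin). Qed.

Lemma skew_K1_gy :
  K1 (D gy) = scal la (scal be1 (D gy) + scal t1 (qmul q (D gx) (R gz) + qmul q (L gx) (D gz))).
Proof.
by case: D_skew => _ K1D _ Dmul; rewrite K1D K1y (ClinearD D_lin) !(ClinearZ D_lin) Dmul.
Qed.

Lemma skew_K2_gy :
  K2 (D gy) = scal (- la) (scal be2 (D gy) + scal t2 (qmul q (D gx) (R gz) + qmul q (L gx) (D gz))).
Proof.
by case: D_skew => _ _ K2D Dmul; rewrite K2D K2y (ClinearD D_lin) !(ClinearZ D_lin) Dmul.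
Qed.

(* Turns an identity [H] in A into the equation between its (i, j, k) coefficients, written
   through the low coefficients of D gx, D gy, D gz and the weights. *)
Local Ltac low_coefs i j k H :=
  move/(congr_coef3 i j k): H => H;
  rewrite ?(coef3D, coef3_scal, qmul_cst, qmul_coefx, qmul_coefy, qmul_coefz) in H;
  rewrite ?(low_diagonal_cst K1_low, low_diagonal_coefx K1_low, low_diagonal_coefy K1_low,
            low_diagonal_coefz K1_low, low_diagonal_cst K2_low, low_diagonal_coefx K2_low,
            low_diagonal_coefy K2_low, low_diagonal_coefz K2_low, low_diagonal_cst L_low,
            low_diagonal_coefx L_low, low_diagonal_coefy L_low, low_diagonal_coefz L_low,
            low_diagonal_cst R_low, low_diagonal_coefx R_low, low_diagonal_coefy R_low,
            low_diagonal_coefz R_low) in H;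
  rewrite ?(cst_gx, coefx_gx, coefy_gx, coefz_gx, cst_gy, coefx_gy, coefy_gy, coefz_gy,
            cst_gz, coefx_gz, coefy_gz, coefz_gz) in H;
  rewrite ?(mulr0, mul0r, mulr1, mul1r, addr0, add0r) in H.

Lemma skew_gx_weights : cst (D gx) != 0 ->
  [/\ al1 = la^-1, al2 = - la^-1, be1^-1 * be2 = q, ga1^-1 * ga2 = q & cst (D gz) = 0].
Proof.
move=> a0_neq0.
have [e1 _ _ _] := low_diagonal_eigen K1_low (skew_K1_eigen K1x).
have [e2 _ _ _] := low_diagonal_eigen K2_low (skew_K2_eigen K2x).
have al1E : al1 = la^-1 by apply/esym/mulr1_eq/(mulIf a0_neq0); rewrite mul1r -e1.
have al2E : al2 = - la^-1.
  by rewrite -invrN; apply/esym/mulr1_eq/(mulIf a0_neq0); rewrite mul1r -e2.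
have zx := skew_qcomm (qmul_zx q); have zx' := zx; have yx := skew_qcomm (qmul_yx q).
low_coefs 1%N 0%N 0%N zx; low_coefs 0%N 0%N 1%N zx'; low_coefs 0%N 1%N 0%N yx.
split=> //.
- by apply: (mulIf (mulf_neq0 ry_neq0 a0_neq0)); rewrite mulrA yx; ring.
- by apply: (mulIf (mulf_neq0 rz_neq0 a0_neq0)); rewrite mulrA zx'; ring.
rewrite al1E al2E invrK mulrN mulfV // in zx.
apply: (eq_lincomb1 zx (c := ((1 + q) * rx)^-1)).
by field_nz.
Qed.

Lemma skew_gx_hcomp : cst (D gx) != 0 -> hcomp 1 (D gx) = 0.
Proof.
move=> a0_neq0; have [al1E al2E be12 ga12 _] := skew_gx_weights a0_neq0.
have [_ x1 y1 z1] := low_diagonal_eigen K1_low (skew_K1_eigen K1x).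
have [_ _ y2 z2] := low_diagonal_eigen K2_low (skew_K2_eigen K2x).
rewrite al1E al2E mulrNN mulfV // in x1 y1 y2 z1 z2.
have p1 : coefx (D gx) = 0 by apply: eq0_of_distinct_mul x1; rewrite (@invr_eq1 C la).
have p2 : coefy (D gx) = 0.
  by apply: (eq0_of_distinct_mul (neq_of_ratio be1_neq0 q_neq1 be12)); rewrite y1 y2.
have p3 : coefz (D gx) = 0.
  by apply: (eq0_of_distinct_mul (neq_of_ratio ga1_neq0 q_neq1 ga12)); rewrite z1 z2.
by rewrite hcomp1 p1 p2 p3 !scal0 !addr0.
Qed.

Lemma skew_gx_gy : cst (D gx) != 0 ->
  hcomp 1 (D gy) = scal (- (cst (D gx) * rz * (t2 + q * t1)) / (2 * q * be1)) gz.
Proof.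
move=> a0_neq0; have [al1E al2E be12 ga12 c0] := skew_gx_weights a0_neq0.
have g1 := skew_K1_gy; have g1' := skew_K2_gy; have g2 := g1; have g3 := g1; have g3' := g1'.
low_coefs 1%N 0%N 0%N g1; low_coefs 1%N 0%N 0%N g1'; low_coefs 0%N 1%N 0%N g2.
low_coefs 0%N 0%N 1%N g3; low_coefs 0%N 0%N 1%N g3'.
rewrite c0 !(mulr0, addr0) in g1 g1'.
have be2E : be2 = q * be1 by rewrite -be12 mulrAC mulVf ?mul1r.
have ga2E : ga2 = q * ga1 by rewrite -ga12 mulrAC mulVf ?mul1r.
have la1_neq0 : 1 - la != 0 by rewrite subr_eq0 eq_sym.
have q1_neq0' : q - 1 != 0 by rewrite subr_eq0.
rewrite al1E al2E be2E in g1 g1'; rewrite be2E ga2E in g3'.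
have w1 : coefx (D gy) = 0.
  apply: (eq_lincomb2 g1 g1' (c1 := (la * be1 * (q - 1))^-1) (c2 := (la * be1 * (q - 1))^-1)).
  by field_nz.
have w2 : coefy (D gy) = 0.
  apply: (eq_lincomb1 g2 (c := (be1 * (1 - la))^-1)).
  by field_nz.
have w3 : coefz (D gy) = - (cst (D gx) * rz * (t2 + q * t1)) / (2 * q * be1).
  apply: (eq_lincomb2 g3 g3' (c1 := - q / (2 * q * la * be1)) (c2 := (2 * q * la * be1)^-1)).
  by field_nz.
(* The two sides differ only in the instance paths of their ring operations, which
   [reflexivity] unifies at once; [done] would fall back to [discriminate] and try to
   normalise polynomials. *)
rewrite hcomp1 w1 w2 w3 (scal0 gx) (scal0 gy) !add0r; reflexivity.
Qed.

Lemma skew_gz_weights : cst (D gz) != 0 ->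
  [/\ ga1 = la^-1, ga2 = - la^-1, be1^-1 * be2 = q^-1, al1^-1 * al2 = q^-1 & cst (D gx) = 0].
Proof.
move=> c0_neq0.
have [e1 _ _ _] := low_diagonal_eigen K1_low (skew_K1_eigen K1z).
have [e2 _ _ _] := low_diagonal_eigen K2_low (skew_K2_eigen K2z).
have ga1E : ga1 = la^-1 by apply/esym/mulr1_eq/(mulIf c0_neq0); rewrite mul1r -e1.
have ga2E : ga2 = - la^-1.
  by rewrite -invrN; apply/esym/mulr1_eq/(mulIf c0_neq0); rewrite mul1r -e2.
have zx := skew_qcomm (qmul_zx q); have zx' := zx; have zy := skew_qcomm (qmul_zy q).
low_coefs 1%N 0%N 0%N zx; low_coefs 0%N 0%N 1%N zx'; low_coefs 0%N 1%N 0%N zy.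
split=> //.
- apply: (eq_lincomb1 zy (c := - (q * ry * cst (D gz))^-1)).
  by field_nz.
- apply: (eq_lincomb1 zx (c := - (q * rx * cst (D gz))^-1)).
  by field_nz.
rewrite ga1E ga2E invrK mulrN mulfV // in zx'.
apply: (eq_lincomb1 zx' (c := - ((1 + q) * rz)^-1)).
by field_nz.
Qed.

Lemma skew_gz_hcomp : cst (D gz) != 0 -> hcomp 1 (D gz) = 0.
Proof.
move=> c0_neq0; have [ga1E ga2E be12 al12 _] := skew_gz_weights c0_neq0.
have [_ x1 y1 z1] := low_diagonal_eigen K1_low (skew_K1_eigen K1z).
have [_ x2 y2 _] := low_diagonal_eigen K2_low (skew_K2_eigen K2z).
rewrite ga1E ga2E mulrNN mulfV // in x1 x2 y1 y2 z1.
have qV_neq1 : q^-1 != 1 by rewrite (@invr_eq1 C q).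
have p1 : coefx (D gz) = 0.
  by apply: (eq0_of_distinct_mul (neq_of_ratio al1_neq0 qV_neq1 al12)); rewrite x1 x2.
have p2 : coefy (D gz) = 0.
  by apply: (eq0_of_distinct_mul (neq_of_ratio be1_neq0 qV_neq1 be12)); rewrite y1 y2.
have p3 : coefz (D gz) = 0 by apply: eq0_of_distinct_mul z1; rewrite (@invr_eq1 C la).
by rewrite hcomp1 p1 p2 p3 !scal0 !addr0.
Qed.

Lemma skew_gz_gy : cst (D gz) != 0 ->
  hcomp 1 (D gy) = scal (- (cst (D gz) * rx * (t1 + q * t2)) / (2 * q * be1)) gx.
Proof.
move=> c0_neq0; have [ga1E ga2E be12 al12 a0] := skew_gz_weights c0_neq0.
have g1 := skew_K1_gy; have g1' := skew_K2_gy; have g2 := g1; have g3 := g1; have g3' := g1'.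
low_coefs 1%N 0%N 0%N g1; low_coefs 1%N 0%N 0%N g1'; low_coefs 0%N 1%N 0%N g2.
low_coefs 0%N 0%N 1%N g3; low_coefs 0%N 0%N 1%N g3'.
rewrite a0 !(mul0r, mulr0, addr0) in g3 g3'.
have be2E : be2 = q^-1 * be1 by rewrite -be12 mulrAC mulVf ?mul1r.
have al2E : al2 = q^-1 * al1 by rewrite -al12 mulrAC mulVf ?mul1r.
have la1_neq0 : 1 - la != 0 by rewrite subr_eq0 eq_sym.
have q1_neq0' : 1 - q != 0 by rewrite subr_eq0 eq_sym.
rewrite al12 be2E in g1 g1'; rewrite al2E in g1'; rewrite ga1E ga2E be2E in g3 g3'.
have w1 : coefx (D gy) = - (cst (D gz) * rx * (t1 + q * t2)) / (2 * q * be1).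
  apply: (eq_lincomb2 g1 g1' (c1 := - (2 * la * be1)^-1) (c2 := q / (2 * la * be1))).
  by field_nz.
have w2 : coefy (D gy) = 0.
  apply: (eq_lincomb1 g2 (c := (be1 * (1 - la))^-1)).
  by field_nz.
have w3 : coefz (D gy) = 0.
  apply: (eq_lincomb2 g3 g3' (c1 := q / (la * be1 * (1 - q))) (c2 := q / (la * be1 * (1 - q)))).
  by field_nz.
rewrite hcomp1 w1 w2 w3 (scal0 gy) (scal0 gz) !addr0; reflexivity.
Qed.

Lemma skew_gx_case : cst (D gx) != 0 ->
  [/\ al1 = la^-1 /\ al2 = - la^-1, be1^-1 * be2 = q, ga1^-1 * ga2 = q, hcomp 1 (D gx) = 0
    & hcomp 1 (D gy) = scal (- (cst (D gx) * rz * (t2 + q * t1)) / (2 * q * be1)) gz].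
Proof.
move=> a0_neq0; have [al1E al2E be12 ga12 _] := skew_gx_weights a0_neq0.
by split; [split | | | exact: skew_gx_hcomp | exact: skew_gx_gy].
Qed.

Lemma skew_gz_case : cst (D gz) != 0 ->
  [/\ ga1 = la^-1 /\ ga2 = - la^-1, be1^-1 * be2 = q^-1, al1^-1 * al2 = q^-1, hcomp 1 (D gz) = 0
    & hcomp 1 (D gy) = scal (- (cst (D gz) * rx * (t1 + q * t2)) / (2 * q * be1)) gx].
Proof.
move=> c0_neq0; have [ga1E ga2E be12 al12 _] := skew_gz_weights c0_neq0.
by split; [split | | | exact: skew_gz_hcomp | exact: skew_gz_gy].
Qed.

End SkewDerivation.

Lemma scal_inj_coef (w : A) i j k c d : coef3 w i j k = 1 -> scal c w = scal d w -> c = d.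
Proof. by move=> w1 /(congr_coef3 i j k); rewrite !coef3_scal w1 !mulr1. Qed.

Lemma nondiagonal_xz q al be ga t K : nondiagonal_automorphism q al be ga t K ->
  K (qmul q gx gz) = scal (al * ga) (qmul q gx gz).
Proof.
case=> _ K_mul _ [Kx _ Kz]; rewrite K_mul Kx Kz qmul_smono qmul_xz.
by rewrite !muln0 !addn0 expr0 mulr1.
Qed.

Lemma Clinear_comp_triangular (K K' : A -> A) (y w : A) (be t c be' t' : C) : Clinear K ->
  K y = scal be y + scal t w -> K w = scal c w -> K' y = scal be' y + scal t' w ->
  K (K' y) = scal (be' * be) y + scal (be' * t + t' * c) w.
Proof.
move=> K_lin Ky Kw K'y; rewrite K'y (ClinearD K_lin) !(ClinearZ K_lin) Ky Kw.
rewrite scalDr !scalA -addrA -(scalDl _ _ w); reflexivity.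
Qed.

Lemma ratio_mul_inv (a b : C) : a != 0 -> b != 0 -> a^-1 * b * (b^-1 * a) = 1.
Proof. by move=> a0 b0; rewrite mulrA mulfK // mulVf. Qed.

Lemma ratio_inv (a b c : C) : a^-1 * b = c -> a * b^-1 = c^-1.
Proof. by move=> <-; rewrite invfM invrK. Qed.

Section NonDiagonal.
Context {q : C} {E F K1 K2 K1' K2' : A -> A} {al1 al2 be1 be2 ga1 ga2 t1 t2 : C}.
Hypotheses (q_neq0 : q != 0) (q_not_root : forall n : nat, (0 < n)%N -> q ^+ n != 1).
Hypothesis HM : module_algebra q E F K1 K2 K1' K2'.
Hypotheses (nz1 : [/\ al1 != 0, al2 != 0, be1 != 0 & be2 != 0])
  (nz2 : [/\ ga1 != 0, ga2 != 0, t1 != 0 & t2 != 0]).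
Hypotheses (K1x : K1 gx = scal al1 gx) (K2x : K2 gx = scal al2 gx)
  (K1y : K1 gy = scal be1 gy + scal t1 (qmul q gx gz))
  (K2y : K2 gy = scal be2 gy + scal t2 (qmul q gx gz))
  (K1z : K1 gz = scal ga1 gz) (K2z : K2 gz = scal ga2 gz).

Let q_facts : q != 0 /\ q != 1 /\ 1 + q != 0.
Proof.
have q_neq1 : q != 1 by have := @q_not_root 1%N isT; rewrite expr1.
do !split => //; apply: contra (@q_not_root 2%N isT) => /eqP q1.
by rewrite (_ : q = -1) ?sqrrN ?expr1n // -(addKr 1 q) q1 addr0.
Qed.

Let qV_neq0_neq1 : q^-1 != 0 /\ q^-1 != 1.
Proof. by case: q_facts => q0 [q1 _]; rewrite invr_eq0 (@invr_eq1 C q). Qed.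

Let q_neq0_neq1 : q != 0 /\ q != 1. Proof. by case: q_facts => ? []. Qed.

Let unit_weights_neq0 : (1 : C) != 0 /\ (1 : C) != 0 /\ (1 : C) != 0.
Proof. by rewrite oner_neq0. Qed.

Let weights1_neq0 : al1 != 0 /\ be1 != 0 /\ ga1 != 0.
Proof. by case: nz1 => ? _ ? _; case: nz2. Qed.

Let K1_aut : nondiagonal_automorphism q al1 be1 ga1 t1 K1.
Proof.
by case: HM => [[_ [_ [K1_lin _]]] [_ [_ [_ [K1_mul [_ [_ [_ [K1_one _]]]]]]]]]; split.
Qed.

Let K2_aut : nondiagonal_automorphism q al2 be2 ga2 t2 K2.
Proof.
by case: HM => [[_ [_ [_ [K2_lin _]]]] [_ [_ [_ [_ [K2_mul [_ [_ [_ [K2_one _]]]]]]]]]]; split.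
Qed.

Let K1'_low : low_diagonal K1' al1^-1 be1^-1 ga1^-1.
Proof.
case: HM => [_ [[K11' _] _]]; case: nz1 => ? _ ? _; case: nz2 => ? _ _ _.
exact: low_diagonal_inv K11' _ _ _ (low_diagonal_of_nondiagonal K1_aut).
Qed.

Let K2'_low : low_diagonal K2' al2^-1 be2^-1 ga2^-1.
Proof.
case: HM => [_ [[_ [_ [K22' _]]] _]]; case: nz1 => _ ? _ ?; case: nz2 => _ ? _ _.
exact: low_diagonal_inv K22' _ _ _ (low_diagonal_of_nondiagonal K2_aut).
Qed.

Let E_skew : skew_derivation q q^-1 K1 K2 (fun a => K2 (K1' a)) (fun b => b) E.
Proof. by case: HM => [[E_lin _] [_ [[K1E [_ [K2E _]]] [_ [_ [_ [E_mul _]]]]]]]; split. Qed.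

Let E_twist : low_diagonal (fun a => K2 (K1' a))
  (al1^-1 * al2 * 1) (be1^-1 * be2 * 1) (ga1^-1 * ga2 * 1).
Proof.
rewrite !mulr1 ![_^-1 * _]mulrC.
exact: low_diagonal_comp (low_diagonal_of_nondiagonal K2_aut) K1'_low.
Qed.

Let F_skew : skew_derivation q q K1 K2 (fun a => a) (fun b => K2' (K1 b)) F.
Proof.
case: HM => [[_ [F_lin _]] [_ [[_ [K1F [_ K2F]]] [_ [_ [_ [_ [F_mul _]]]]]]]].
by split=> // a b; rewrite F_mul addrC.
Qed.

Let F_R_low : low_diagonal (fun b => K2' (K1 b)) (al2^-1 * al1) (be2^-1 * be1) (ga2^-1 * ga1).
Proof. exact: low_diagonal_comp K2'_low (low_diagonal_of_nondiagonal K1_aut). Qed.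

Let F_twist : low_diagonal (fun a => a) (al1^-1 * al2 * (al2^-1 * al1))
  (be1^-1 * be2 * (be2^-1 * be1)) (ga1^-1 * ga2 * (ga2^-1 * ga1)).
Proof.
by case: nz1 => ? ? ? ?; case: nz2 => ? ? _ _; rewrite !ratio_mul_inv //; apply: low_diagonal_id.
Qed.

Let F_twist_neq0 : al2^-1 * al1 != 0 /\ be2^-1 * be1 != 0 /\ ga2^-1 * ga1 != 0.
Proof. by case: nz1 => ? ? ? ?; case: nz2 => ? ? _ _; rewrite !mulf_neq0 ?invr_eq0. Qed.

(* The coefficient of x z in K1 (K2 y) = K2 (K1 y). *)
Lemma commuting_twists : be2 * t1 + t2 * (al1 * ga1) = be1 * t2 + t1 * (al2 * ga2).
Proof.
case: HM => _ [[_ [_ [_ [_ K12]]]] _].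
have [[K1_lin _ _ _] [K2_lin _ _ _]] := (K1_aut, K2_aut).
have K1xz := nondiagonal_xz K1_aut; have K2xz := nondiagonal_xz K2_aut.
move: (K12 gy); rewrite (Clinear_comp_triangular K1_lin K1y K1xz K2y).
rewrite (Clinear_comp_triangular K2_lin K2y K2xz K1y).
have xz_coef : coef3 (qmul q gx gz) 1 0 1 = 1 by rewrite qmul_xz coef3_mono.
rewrite (mulrC be2 be1) => /addrI /(scal_inj_coef xz_coef) eq_t; exact: eq_t.
Qed.

Lemma E_gx_case : cst (E gx) != 0 ->
  al1 = q /\ al2 = - q /\ be1^-1 * be2 = q /\ ga1^-1 * ga2 = q /\ hcomp 1 (E gx) = 0 /\
  hcomp 1 (E gy) = scal (- (cst (E gx) * (t2 + q * t1)) / (2 * q * be1)) gz.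
Proof.
move=> a0_neq0; have [[-> ->] ? ? ? ->] := skew_gx_case q_facts qV_neq0_neq1 weights1_neq0
  unit_weights_neq0 K1_aut K2_aut low_diagonal_id E_twist E_skew a0_neq0.
by rewrite invrK mulr1; do !split; first [reflexivity | assumption].
Qed.

Lemma E_gz_case : cst (E gz) != 0 ->
  ga1 = q /\ ga2 = - q /\ be1^-1 * be2 = q^-1 /\ al1^-1 * al2 = q^-1 /\ hcomp 1 (E gz) = 0 /\
  hcomp 1 (E gy) = scal (- (cst (E gz) * (t1 + q * t2)) / (2 * q * be1)) gx.
Proof.
move=> c0_neq0; have [[-> ->] ? ? ? ->] := skew_gz_case q_facts qV_neq0_neq1 weights1_neq0
  unit_weights_neq0 K1_aut K2_aut low_diagonal_id E_twist E_skew c0_neq0.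
by rewrite invrK mulr1; do !split; first [reflexivity | assumption].
Qed.

Lemma F_gx_case : cst (F gx) != 0 ->
  al1 = q^-1 /\ al2 = - q^-1 /\ be1 * be2^-1 = q^-1 /\ ga1 * ga2^-1 = q^-1 /\
  hcomp 1 (F gx) = 0 /\
  hcomp 1 (F gy) = scal ((cst (F gx) * (t2 - q * t1)) / (2 * q * al2 * ga2)) gz.
Proof.
move=> a0_neq0; have [[al1E al2E] be12 ga12 hx ->] := skew_gx_case q_facts q_neq0_neq1
  weights1_neq0 F_twist_neq0 K1_aut K2_aut F_R_low F_twist F_skew a0_neq0.
split; first exact: al1E.
split; first exact: al2E.
split; first exact: ratio_inv be12.
split; first exact: ratio_inv ga12.
split; first exact: hx.
have [_ [be1_neq0 ga1_neq0]] := weights1_neq0.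
have be2E : be2 = q * be1 by rewrite -be12 mulrAC mulVf ?mul1r.
have ga2E : ga2 = q * ga1 by rewrite -ga12 mulrAC mulVf ?mul1r.
have rel := commuting_twists; rewrite al1E al2E be2E ga2E in rel; rewrite al2E ga2E.
congr (scal _ gz); apply: (eq_lincomb1 rel (c := - cst (F gx) / (2 * q * be1 * ga1))).
by field_nz.
Qed.

Lemma F_gz_case : cst (F gz) != 0 ->
  ga1 = q^-1 /\ ga2 = - q^-1 /\ be1 * be2^-1 = q /\ al1 * al2^-1 = q /\ hcomp 1 (F gz) = 0 /\
  hcomp 1 (F gy) = scal ((cst (F gz) * (q * t2 - t1)) / (2 * q * al2 * ga2)) gx.
Proof.
move=> c0_neq0; have [[ga1E ga2E] be12 al12 hz ->] := skew_gz_case q_facts q_neq0_neq1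
  weights1_neq0 F_twist_neq0 K1_aut K2_aut F_R_low F_twist F_skew c0_neq0.
split; first exact: ga1E.
split; first exact: ga2E.
split; first by rewrite (ratio_inv be12) invrK.
split; first by rewrite (ratio_inv al12) invrK.
split; first exact: hz.
have [al1_neq0 [be1_neq0 _]] := weights1_neq0.
have be2E : be2 = q^-1 * be1 by rewrite -be12 mulrAC mulVf ?mul1r.
have al2E : al2 = q^-1 * al1 by rewrite -al12 mulrAC mulVf ?mul1r.
have rel := commuting_twists; rewrite ga1E ga2E be2E al2E in rel; rewrite al2E ga2E.
congr (scal _ gx); apply: (eq_lincomb1 rel (c := - cst (F gz) * q ^+ 2 / (2 * al1 * be1))).
by field_nz.
Qed.

End NonDiagonal.

Theorem lemma3p3 (q : C) (E F K1 K2 K1' K2' : A -> A)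
  (al1 al2 be1 be2 ga1 ga2 t1 t2 : C) :
  q != 0 -> (forall n : nat, (0 < n)%N -> q ^+ n != 1) ->
  module_algebra q E F K1 K2 K1' K2' ->
  [/\ al1 != 0, al2 != 0, be1 != 0 & be2 != 0] ->
  [/\ ga1 != 0, ga2 != 0, t1 != 0 & t2 != 0] ->
  K1 gx = scal al1 gx -> K2 gx = scal al2 gx ->
  K1 gy = scal be1 gy + scal t1 (qmul q gx gz) ->
  K2 gy = scal be2 gy + scal t2 (qmul q gx gz) ->
  K1 gz = scal ga1 gz -> K2 gz = scal ga2 gz ->
  let a0 := coef3 (E gx) 0 0 0 in
  let c0 := coef3 (E gz) 0 0 0 in
  let a0' := coef3 (F gx) 0 0 0 in
  let c0' := coef3 (F gz) 0 0 0 in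
  (a0 != 0 ->
     al1 = q /\ al2 = - q /\ be1^-1 * be2 = q /\ ga1^-1 * ga2 = q /\
     hcomp 1 (E gx) = 0 /\
     hcomp 1 (E gy) = scal (- (a0 * (t2 + q * t1)) / (2 * q * be1)) gz) /\
  (c0 != 0 ->
     ga1 = q /\ ga2 = - q /\ be1^-1 * be2 = q^-1 /\ al1^-1 * al2 = q^-1 /\
     hcomp 1 (E gz) = 0 /\
     hcomp 1 (E gy) = scal (- (c0 * (t1 + q * t2)) / (2 * q * be1)) gx) /\
  (a0' != 0 ->
     al1 = q^-1 /\ al2 = - q^-1 /\ be1 * be2^-1 = q^-1 /\
     ga1 * ga2^-1 = q^-1 /\ hcomp 1 (F gx) = 0 /\
     hcomp 1 (F gy) = scal ((a0' * (t2 - q * t1)) / (2 * q * al2 * ga2)) gz) /\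
  (c0' != 0 ->
     ga1 = q^-1 /\ ga2 = - q^-1 /\ be1 * be2^-1 = q /\
     al1 * al2^-1 = q /\ hcomp 1 (F gz) = 0 /\
     hcomp 1 (F gy) = scal ((c0' * (q * t2 - t1)) / (2 * q * al2 * ga2)) gx).
Proof.
move=> q_neq0 q_not_root HM nz1 nz2 K1x K2x K1y K2y K1z K2z a0 c0 a0' c0'.
split; first exact: (E_gx_case q_neq0 q_not_root HM nz1 nz2 K1x K2x K1y K2y K1z K2z).
split; first exact: (E_gz_case q_neq0 q_not_root HM nz1 nz2 K1x K2x K1y K2y K1z K2z).
split; first exact: (F_gx_case q_neq0 q_not_root HM nz1 nz2 K1x K2x K1y K2y K1z K2z).
exact: (F_gz_case q_neq0 q_not_root HM nz1 nz2 K1x K2x K1y K2y K1z K2z).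
Qed.
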